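(* There is no binary self-orthogonal $[118,7,58]$ code.
   Context: A binary linear code $C$ is self-orthogonal if $C\subseteq C^\perp$. *)

From HB Require Import structures.
From mathcomp Require Import all_boot all_order all_algebra all_field.
Set Implicit Arguments. Unset Strict Implicit. Unset Printing Implicit Defensive.
Import GRing.Theory.
Local Open Scope ring_scope.

Definition bcode (n : nat) := {vspace 'rV['F_2]_n}.

Definition bdot (n : nat) (x y : 'rV['F_2]_n) : 'F_2 := \sum_(i < n) x 0 i * y 0 i.

Definition hwt (n : nat) (x : 'rV['F_2]_n) : nat := #|[set i | x 0 i != 0]|.

Definition self_orthogonal (n : nat) (C : bcode n) : Prop :=
  forall x y, x \in C -> y \in C -> bdot x y = 0.

Definition min_dist (n : nat) (C : bcode n) (d : nat) : Prop :=
  (exists2 c, c \in C & (c != 0) && (hwt c == d)) /\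
  (forall c, c \in C -> c != 0 -> (d <= hwt c)%N).

Definition is_code_nkd (n k d : nat) (C : bcode n) : Prop :=
  \dim C = k /\ min_dist C d.

(* The codewords of weight divisible by 4 in a self-orthogonal binary code C
   form a subspace D (weights in C are even and codewords overlap in an even
   number of positions), and a codeword of weight 58 = 2 mod 4 shows that D has
   index at most 2, so #|D| >= 2^7 / 2 = 64.  Every nonzero word of D has weight
   at least 60, and D is closed under addition, so the Plotkin double count of
   the weights of D (each coordinate is nonzero in at most half of D) gives
   120 * #|D| <= 120 + 118 * #|D|, i.e. #|D| <= 60. *)

From mathcomp Require Import all_boot all_order all_algebra all_field zify.
Import GRing.Theory.
Set Implicit Arguments. Unset Strict Implicit. Unset Printing Implicit Defensive.
Local Open Scope ring_scope.

Lemma F2_cases (a : 'F_2) : a = 0 \/ a = 1.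
Proof. by case: a => -[|[|m]] Hm; [left|right|]; try apply/val_inj. Qed.

Lemma F2_add11 : 1 + 1 = 0 :> 'F_2.
Proof. exact/val_inj. Qed.

Lemma addrr_F2 n (v : 'rV['F_2]_n) : v + v = 0.
Proof.
by apply/rowP => i; rewrite !mxE; case: (F2_cases (v 0 i)) => ->; rewrite ?addr0 ?F2_add11.
Qed.

Lemma card_set_sum (T : finType) (P : pred T) : #|[set x | P x]| = (\sum_x P x)%N.
Proof. by rewrite -sum1dep_card big_mkcond; apply: eq_bigr => x _; case: (P x). Qed.

Lemma hwt0 n : hwt (0 : 'rV['F_2]_n) = 0%N.
Proof. by rewrite /hwt eq_card0 // => i; rewrite inE mxE eqxx. Qed.

Definition overlap n (x y : 'rV['F_2]_n) : nat :=
  #|[set i | (x 0 i != 0) && (y 0 i != 0)]|.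

Lemma overlapxx n (x : 'rV['F_2]_n) : overlap x x = hwt x.
Proof. by apply: eq_card => i; rewrite !inE andbb. Qed.

Lemma hwtD n (x y : 'rV['F_2]_n) : (hwt (x + y) + 2 * overlap x y = hwt x + hwt y)%N.
Proof.
rewrite /hwt /overlap !card_set_sum big_distrr -!big_split; apply: eq_bigr => i _.
rewrite !mxE; case: (F2_cases (x 0 i)) => ->; case: (F2_cases (y 0 i)) => ->;
  by rewrite ?F2_add11 ?addr0 ?add0r ?oner_eq0 ?eqxx.
Qed.

Lemma bdot_overlap n (x y : 'rV['F_2]_n) : bdot x y = (overlap x y)%:R.
Proof.
rewrite /bdot /overlap card_set_sum natr_sum; apply: eq_bigr => i _.
case: (F2_cases (x 0 i)) => ->; case: (F2_cases (y 0 i)) => ->;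
  by rewrite ?mulr0 ?mul0r ?mulr1 ?oner_eq0 ?eqxx.
Qed.

Lemma dvd2_F2_eq0 m : ((m%:R : 'F_2) == 0) = (2 %| m)%N.
Proof. by rewrite (dvdn_pcharf (pchar_Fp (isT : prime 2))). Qed.

Lemma sum_hwt_coord n (D : {set 'rV['F_2]_n}) :
  (\sum_(x in D) hwt x = \sum_(i < n) #|[set x in D | x 0%R i != 0%R]|)%N.
Proof.
rewrite (eq_bigr _ (fun x _ => card_set_sum _)) exchange_big /=.
apply: eq_bigr => i _; rewrite -sum1_card big_mkcond [RHS]big_mkcond /=.
by apply: eq_bigr => x _; rewrite inE; case: (x \in D); case: (x 0 i != 0).
Qed.

Section Plotkin.

Variables (n : nat) (D : {set 'rV['F_2]_n}).
Hypothesis D_addr : forall x y, x \in D -> y \in D -> x + y \in D.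

(* Adding a word of D that is nonzero at i maps the words nonzero at i
   injectively to the words of D that vanish at i. *)
Lemma card_coord_neq0 (i : 'I_n) : (2 * #|[set x in D | x 0%R i != 0%R]| <= #|D|)%N.
Proof.
set A := [set x in D | x 0 i != 0].
have [-> | [y]] := set_0Vmem A; first by rewrite cards0.
rewrite inE => /andP[yD yi].
have AD : A \subset D by apply/subsetP => x; rewrite inE => /andP[].
suff: (#|A| <= #|D :\: A|)%N by rewrite -(cardsID A D) (setIidPr AD); lia.
rewrite -(card_imset _ (addIr y)); apply: subset_leq_card.
apply/subsetP => _ /imsetP[x + ->]; rewrite inE => /andP[xD xi].
rewrite !inE D_addr //= andbT !mxE.
by case: (F2_cases (x 0 i)) xi => -> //; case: (F2_cases (y 0 i)) yi => -> //.
Qed.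

Lemma sum_hwt_le : (2 * \sum_(x in D) hwt x <= n * #|D|)%N.
Proof.
rewrite sum_hwt_coord big_distrr -[X in (_ <= X * _)%N](card_ord n) -sum_nat_const.
by apply: leq_sum => i _; apply: card_coord_neq0.
Qed.

Lemma plotkin_bound (d : nat) :
  0 \in D -> (forall x, x \in D -> x != 0 -> (d <= hwt x)%N) ->
  (2 * d * #|D| <= 2 * d + n * #|D|)%N.
Proof.
move=> D0 D_min.
have: (#|D| * d <= d + \sum_(x in D) hwt x)%N.
  rewrite -sum_nat_const (bigD1 0) //= [X in (_ <= _ + X)%N](bigD1 0) //= hwt0.
  rewrite leq_add2l; apply: leq_sum => x /andP[xD x0]; exact: D_min.
have := sum_hwt_le; lia.
Qed.

End Plotkin.

Section DoublyEven.

Variables (n : nat) (C : bcode n).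
Hypothesis C_so : self_orthogonal C.

Definition doubly_even : {set 'rV['F_2]_n} := [set x | (x \in C) && (4 %| hwt x)%N].

Lemma overlap_even (x y : 'rV['F_2]_n) : x \in C -> y \in C -> (2 %| overlap x y)%N.
Proof. by move=> xC yC; rewrite -dvd2_F2_eq0 -bdot_overlap C_so. Qed.

Lemma hwtD_mod4 (x y : 'rV['F_2]_n) :
  x \in C -> y \in C -> (hwt (x + y) = hwt x + hwt y %[mod 4])%N.
Proof. by move=> xC yC; have := hwtD x y; have := overlap_even xC yC; lia. Qed.

Lemma doubly_even0 : 0 \in doubly_even.
Proof. by rewrite inE mem0v hwt0. Qed.

Lemma doubly_even_addr x y :
  x \in doubly_even -> y \in doubly_even -> x + y \in doubly_even.
Proof.
rewrite !inE => /andP[xC x4] /andP[yC y4]; rewrite memvD //=.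
by have := hwtD_mod4 xC yC; lia.
Qed.

(* Every codeword outside doubly_even lies in doubly_even + c. *)
Lemma card_doubly_even c :
  c \in C -> (hwt c = 2 %[mod 4])%N -> (#|C| <= 2 * #|doubly_even|)%N.
Proof.
move=> cC c2; set D := doubly_even.
have C_sub : C \subset D :|: [set x + c | x in D].
  apply/subsetP => x xC; rewrite !inE xC /=.
  have [//|x4] := boolP (4 %| hwt x)%N; apply/imsetP; exists (x + c).
    rewrite inE memvD //=.
    have := hwtD_mod4 xC cC; have := overlap_even xC xC; rewrite overlapxx; lia.
  by rewrite -addrA addrr_F2 addr0.
apply: leq_trans (subset_leq_card C_sub) _; rewrite mul2n -addnn.
by apply: leq_trans (leq_card_setU _ _).1 _; rewrite leq_add2l leq_imset_card.
Qed.

End DoublyEven.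

Theorem proposition6p4 :
  ~ exists C : bcode 118, is_code_nkd 7 58 C /\ self_orthogonal C.
Proof.
case=> C [[dimC [[c cC /andP[_ /eqP wc]] minC]] C_so].
have D_min x : x \in doubly_even C -> x != 0 -> (60 <= hwt x)%N.
  by rewrite inE => /andP[xC x4] x0; have := minC x xC x0; lia.
have := plotkin_bound (doubly_even_addr C_so) (doubly_even0 C) D_min.
have c2 : (hwt c = 2 %[mod 4])%N by rewrite wc.
have := card_doubly_even C_so cC c2.
by rewrite card_vspace dimC card_Fp //; lia.
Qed.
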